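(* Let $A,B\subset\mathbb{Z}_n$ with $|A|=|B|$ and $\gcd(b,n)=1$ for every $b\in B$. Then $A$ is matched to $B$.
   Context: $\mathbb{Z}_n$ is the additive cyclic group of order $n$. For finite subsets $A,B$ of an abelian group written additively with $|A|=|B|$, $A$ is matched to $B$ if there is a bijection $f:A\to B$ with $a+f(a)\notin A$ for every $a\in A$. *)

From mathcomp Require Import all_boot all_algebra.
Set Implicit Arguments. Unset Strict Implicit. Unset Printing Implicit Defensive.
Import GRing.Theory.
Local Open Scope ring_scope.

Definition matched (G : finZmodType) (A B : {set G}) : Prop :=
  exists f : G -> G,
    [/\ {in A &, injective f}, f @: A = B & forall a, a \in A -> a + f a \notin A].

(* By Hall's marriage theorem it suffices that for every S ⊆ A at least #|S|
   elements b of B satisfy S + b ⊄ A.  The other elements of B form a set T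
   with S + ({0} ∪ T) ⊆ A ≠ Z_n, and every nonzero element of {0} ∪ T
   generates Z_n, so Chowla's theorem #|S| + #|{0} ∪ T| ≤ #|S + ({0} ∪ T)| + 1
   gives #|S| + #|T| ≤ #|A| = #|B|.  Chowla's theorem itself follows by
   induction on #|B| using Dyson's e-transform; when no e-transform shrinks B,
   A is stable under B, which forces A = Z_n or B = {0}. *)

From mathcomp Require Import all_boot all_algebra zify.
Set Implicit Arguments. Unset Strict Implicit. Unset Printing Implicit Defensive.

Import GRing.Theory.

Section HallMarriage.
Variables X Y : finType.
Implicit Types (R : X -> Y -> bool) (A S : {set X}) (C : {set Y}).

Definition nbhd R S : {set Y} := [set y | [exists x in S, R x y]].

Definition hall_condition R A := forall S, S \subset A -> #|S| <= #|nbhd R S|.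

Definition matching R A (f : X -> Y) :=
  {in A, forall x, R x (f x)} /\ {in A &, injective f}.

Definition avoiding R C x y := R x y && (y \notin C).

Lemma nbhdP R S y : reflect (exists2 x, x \in S & R x y) (y \in nbhd R S).
Proof.
rewrite inE; apply: (iffP existsP) => [[x /andP[]]|[x xS Rxy]]; first by exists x.
by exists x; rewrite xS.
Qed.

Lemma nbhdU R S1 S2 : nbhd R (S1 :|: S2) = nbhd R S1 :|: nbhd R S2.
Proof.
apply/setP => y; rewrite in_setU; apply/nbhdP/orP.
  by case=> x; rewrite in_setU => /orP[] xS Rxy; [left | right]; apply/nbhdP; exists x.
by case=> /nbhdP[x xS Rxy]; exists x; rewrite // in_setU xS ?orbT.
Qed.

Lemma nbhd_avoiding R C S : nbhd (avoiding R C) S = nbhd R S :\: C.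
Proof.
apply/setP => y; rewrite in_setD andbC; apply/nbhdP/andP.
  by case=> x xS /andP[Rxy yC]; split=> //; apply/nbhdP; exists x.
by case=> /nbhdP[x xS Rxy] yC; exists x; rewrite // /avoiding Rxy.
Qed.

Lemma hall_conditionS R A S : hall_condition R A -> S \subset A -> hall_condition R S.
Proof. by move=> hallA SA S' S'S; apply/hallA/(subset_trans S'S). Qed.

(* A tight set S0 uses up its whole neighbourhood, so the rest of A must be
   matched outside of it. *)
Lemma hall_condition_tight R A S0 :
  hall_condition R A -> S0 \subset A -> #|nbhd R S0| <= #|S0| ->
  hall_condition (avoiding R (nbhd R S0)) (A :\: S0).
Proof.
move=> hallA S0A tight S; rewrite subsetD nbhd_avoiding => /andP[SA S0S].
have := hallA (S :|: S0); rewrite subUset S0A SA.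
rewrite nbhdU !cardsU cardsD (disjoint_setI0 S0S) cards0 => /(_ isT).
have := subset_leq_card (subsetIl (nbhd R S) (nbhd R S0)); lia.
Qed.

(* If every nonempty proper subset has a surplus neighbour, any single edge
   [a, b] can be used in the matching. *)
Lemma hall_condition_loose R A a b :
  (forall S, S \subset A :\ a -> S != set0 -> #|S| < #|nbhd R S|) ->
  hall_condition (avoiding R [set b]) (A :\ a).
Proof.
move=> surplus S SA; rewrite nbhd_avoiding.
have [->|S0] := eqVneq S set0; first by rewrite cards0.
have := surplus S SA S0; rewrite (cardsD1 b (nbhd R S)); case: (_ \in _) => //=.
exact: ltnW.
Qed.

Lemma matching_glue R A S0 C f1 f2 :
  S0 \subset A -> {in S0, forall x, f1 x \in C} ->
  matching R S0 f1 -> matching (avoiding R C) (A :\: S0) f2 ->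
  matching R A (fun x => if x \in S0 then f1 x else f2 x).
Proof.
move=> S0A f1C [R1 inj1] [R2 inj2].
have out2 x : x \in A -> x \notin S0 -> R x (f2 x) && (f2 x \notin C).
  by move=> xA xS0; apply: R2; rewrite in_setD xS0.
split=> [x xA|x1 x2 x1A x2A].
  by case: ifPn => xS0; [apply: R1 | case/andP: (out2 x xA xS0)].
case: ifPn => x1S0; case: ifPn => x2S0.
- exact: inj1.
- by move=> e; case/andP: (out2 x2 x2A x2S0) => _; rewrite -e f1C.
- by move=> e; case/andP: (out2 x1 x1A x1S0) => _; rewrite e f1C.
- by apply: inj2; rewrite in_setD ?x1S0 ?x2S0.
Qed.

Theorem hall_marriage (y0 : Y) R A :
  hall_condition R A -> exists f, matching R A f.
Proof.
elim: {A}_.+1 {-2}A (ltnSn #|A|) R => // m IH A Am R hallA.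
have [->|[a aA]] := set_0Vmem A; first by exists (fun=> y0); split=> x; rewrite inE.
have [/existsP[S0 /and4P[S0A S0n0 S0nA tight]]|loose] := boolP
  [exists S0 : {set X}, [&& S0 \subset A, S0 != set0, S0 != A & #|nbhd R S0| <= #|S0|]].
  have ltS0 : #|S0| < #|A| by apply/proper_card; rewrite properEneq S0nA.
  have [|f1 m1] := IH S0 _ R (hall_conditionS hallA S0A); first lia.
  have [|f2 m2] := IH (A :\: S0) _ _ (hall_condition_tight hallA S0A tight).
    by move: S0n0; rewrite cardsDS // -card_gt0; lia.
  have f1N x : x \in S0 -> f1 x \in nbhd R S0.
    by move=> xS0; apply/nbhdP; exists x => //; case: m1 => + _; apply.
  by exists (fun x => if x \in S0 then f1 x else f2 x); apply: matching_glue m1 m2.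
have [b /nbhdP[_ /set1P-> Rab]] : exists b, b \in nbhd R [set a].
  by apply/set0Pn; rewrite -card_gt0 (leq_trans _ (hallA _ _)) ?cards1 ?sub1set.
have [||f m2] := IH (A :\ a) _ (avoiding R [set b]) _.
- by rewrite (cardsD1 a A) aA in Am.
- apply: hall_condition_loose => S SA Sn0; rewrite ltnNge; apply: contra loose => tight.
  apply/existsP; exists S; rewrite Sn0 tight (subset_trans SA (subsetDl _ _)) andbT /=.
  by apply: contraTneq SA => ->; apply/subsetPn; exists a; rewrite ?setD11.
exists (fun x => if x \in [set a] then b else f x).
apply: matching_glue m2; rewrite ?sub1set //; first by move=> x _; apply: set11.
by split=> [x /set1P->|x1 x2 /set1P-> /set1P->].
Qed.

End HallMarriage.

Local Open Scope ring_scope.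

Section Chowla.
Variable G : finZmodType.
Implicit Types (A B : {set G}) (e : G).

Definition sumset A B : {set G} := [set x + y | x in A, y in B].

Definition additive_generator (b : G) := forall y : G, exists k, y = b *+ k.

Lemma sumset_subl A B : 0 \in B -> A \subset sumset A B.
Proof. by move=> B0; apply/subsetP => x xA; rewrite -[x]addr0 imset2_f. Qed.

Lemma stable_generator_setT A b :
  A != set0 -> additive_generator b -> {in A, forall a, a + b \in A} -> A = setT.
Proof.
case/set0Pn=> a aA gen_b closed; apply/setP => y; rewrite inE.
have [k ek] := gen_b (y - a); rewrite -(addrNK a y) {}ek addrC.
by elim: k => [|k IH]; rewrite ?mulr0n ?addr0 // mulrSr addrA; apply: closed.
Qed.

Definition dysonA e A B := A :|: [set e + x | x in B].
Definition dysonB e A B := [set x in B | e + x \in A].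

Lemma sumset_dyson e A B : sumset (dysonA e A B) (dysonB e A B) \subset sumset A B.
Proof.
apply/subsetP => _ /imset2P[x y /setUP[xA|/imsetP[w wB ->]] /setIdP[yB eyA] ->].
  exact: imset2_f.
by rewrite addrAC imset2_f.
Qed.

Lemma card_dyson e A B : (#|dysonA e A B| + #|dysonB e A B| = #|A| + #|B|)%N.
Proof.
have -> : #|dysonB e A B| = #|A :&: [set e + x | x in B]|.
  rewrite -(card_imset _ (addrI e)); apply: eq_card => z; rewrite inE.
  apply/imsetP/andP => [[x /setIdP[xB exA] ->]|[zA /imsetP[x xB zE]]].
    by rewrite exA imset_f.
  by exists x; rewrite // inE xB -zE.
by rewrite cardsUI card_imset //; apply: addrI.
Qed.

Theorem chowla A B :
  A != set0 -> 0 \in B -> {in B, forall b, b != 0 -> additive_generator b} ->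
  sumset A B != setT -> (#|A| + #|B| <= #|sumset A B| + 1)%N.
Proof.
elim: {B}_.+1 {-2}B (ltnSn #|B|) A => // m IH B Bm A An0 B0 genB ABnT.
have [/existsP[e /andP[eA /existsP[b /andP[bB ebA]]]]|closed] :=
  boolP [exists e in A, exists b in B, e + b \notin A].
  have ltB : (#|dysonB e A B| < #|B|)%N.
    apply/proper_card/properP; split; first by apply/subsetP => x /setIdP[].
    by exists b; rewrite // inE (negbTE ebA) andbF.
  have sub := sumset_dyson e A B.
  apply: (@leq_trans (#|sumset (dysonA e A B) (dysonB e A B)| + 1)).
    rewrite -(card_dyson e); apply: IH; first lia.
    - by apply/set0Pn; exists e; rewrite inE eA.
    - by rewrite inE B0 addr0.
    - by move=> x /setIdP[xB _]; apply: genB.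
    - by apply: contraNneq ABnT => eT; rewrite eqEsubset subsetT -eT sub.
  by rewrite leq_add2r subset_leq_card.
have AB a b : a \in A -> b \in B -> a + b \in A.
  move=> aA bB; apply: contraNT closed => abA.
  by apply/existsP; exists a; rewrite aA; apply/existsP; exists b; rewrite bB.
have [/existsP[b /andP[bB bn0]]|B_0] := boolP [exists b in B, b != 0].
  case/negP: ABnT; rewrite eqEsubset subsetT /=.
  have AT := stable_generator_setT An0 (genB b bB bn0) (fun a aA => AB a b aA bB).
  by rewrite -AT sumset_subl.
have B1 : B \subset [set 0].
  apply/subsetP => b bB; apply/set1P; apply: contraNeq B_0 => bn0.
  by apply/existsP; exists b; rewrite bB.
have := subset_leq_card B1; have := subset_leq_card (sumset_subl A B0); rewrite cards1; lia.
Qed.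

End Chowla.

Section MatchedGenerators.
Variable G : finZmodType.
Implicit Types A B : {set G}.

Definition escapes A B (a b : G) := (a + b \notin A) && (b \in B).

Lemma matched_of_hall A B :
  #|A| = #|B| -> hall_condition (escapes A B) A -> matched A B.
Proof.
move=> AB /(hall_marriage 0)[f [fR f_inj]]; exists f; split=> //.
  apply/eqP; rewrite eqEcard card_in_imset // AB leqnn andbT.
  by apply/subsetP => _ /imsetP[a /fR /andP[_ faB] ->].
by move=> a /fR /andP[].
Qed.

Lemma hall_condition_escapes A B :
  #|A| = #|B| -> A != setT -> 0 \notin B -> {in B, forall b, additive_generator b} ->
  hall_condition (escapes A B) A.
Proof.
move=> AB AnT B0 genB S SA.
have [->|Sn0] := eqVneq S set0; first by rewrite cards0.
set N := nbhd _ S; pose T := B :\: N.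
have ST : sumset S (0 |: T) \subset A.
  apply/subsetP => _ /imset2P[a b aS /setU1P[->|/setDP[bB bN]] ->].
    by rewrite addr0 (subsetP SA).
  by apply: contraNT bN => abA; apply/nbhdP; exists a; rewrite // /escapes abA.
have genT : {in 0 |: T, forall b, b != 0 -> additive_generator b}.
  by move=> b /setU1P[->|/setDP[bB _]]; rewrite ?eqxx // => _; apply: genB.
have STnT : sumset S (0 |: T) != setT.
  by apply: contraNneq AnT => eT; rewrite eqEsubset subsetT -eT ST.
have := chowla Sn0 (setU11 0 T) genT STnT.
have T0 : 0 \notin T by rewrite inE (negbTE B0) andbF.
have := subset_leq_card ST; have := cardsID N B; have := subset_leq_card (subsetIr B N).
rewrite cardsU1 T0 AB -/T add1n; lia.
Qed.

Theorem matched_of_generators A B :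
  #|A| = #|B| -> 0 \notin B -> {in B, forall b, additive_generator b} -> matched A B.
Proof.
move=> AB B0 genB; apply: matched_of_hall => //; apply: hall_condition_escapes => //.
apply: contraNneq B0 => AT; suff -> : B = setT by rewrite inE.
by apply/eqP; rewrite eqEcard subsetT /= -AB AT.
Qed.

End MatchedGenerators.

Lemma Zp_coprime_generator n (b : 'Z_n) :
  (1 < n)%N -> coprime (val b) n -> additive_generator b.
Proof.
move=> n_gt1 cop_b y.
have b_unit : b \is a GRing.unit by rewrite -[b]natr_Zp unitZpE // coprime_sym.
by exists (val (b^-1 * y)); rewrite -mulr_natr natr_Zp mulrA mulrV // mul1r.
Qed.

Theorem corollary3p1 (n : nat) (Hn : (1 < n)%N) (A B : {set 'Z_n}) :
  #|A| = #|B| ->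
  (forall b, b \in B -> gcdn (val b) n = 1%N) ->
  matched A B.
Proof.
move=> AB hB; apply: matched_of_generators => //.
  by apply/negP => /hB; rewrite gcd0n => n1; rewrite n1 in Hn.
by move=> b /hB cop_b; apply: Zp_coprime_generator => //; apply/eqP.
Qed.
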